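(* Let $(X,Y)$ and $(\tilde X,\tilde Y)$ be random pairs on finite sets $\mathcal X\times\mathcal Y$ and suppose $D_{\chi^2}(P_{\tilde Y,\tilde X}\|P_{Y,X})\le\beta^2$. Then $P_{\tilde X}(x)=P_X(x)+O(\beta)$ for all $x\in\mathcal X$, and $P_{\tilde Y\mid\tilde X}(y\mid x)=P_{Y\mid X}(y\mid x)+O(\beta)$ for all $x\in\mathcal X$, $y\in\mathcal Y$. In addition, if $H_L(\tilde Y;Y\mid\tilde X)$ is bounded, then $H_L(\tilde Y;Y\mid\tilde X)=H_L(Y\mid X)+O(\beta)$.
   Context: Neyman's $\chi^2$-divergence: $D_{\chi^2}(P\|Q)=\sum_z(P(z)-Q(z))^2/Q(z)$. For a loss $L:\mathcal Y\times\mathcal A\to\mathbb R$: $H_L(Y\mid X=x)=\min_{a\in\mathcal A}\mathbb E_{Y\sim P_{Y\mid X=x}}[L(Y,a)]$ with minimizer (Bayes action) $a_{P_{Y\mid X=x}}$, and $H_L(Y\mid X)=\sum_xP_X(x)H_L(Y\mid X=x)$, assumed bounded. The generalized conditional cross entropy is $H_L(\tilde Y;Y\mid\tilde X=x)=\mathbb E_{Y\sim P_{\tilde Y\mid\tilde X=x}}[L(Y,a_{P_{Y\mid X=x}})]$ and $H_L(\tilde Y;Y\mid\tilde X)=\sum_xP_{\tilde X}(x)H_L(\tilde Y;Y\mid\tilde X=x)$. $O(\beta)$ is as $\beta\to0$. *)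

From HB Require Import structures.
From mathcomp Require Import all_boot all_order all_algebra.
From mathcomp Require Import reals constructive_ereal.
Set Implicit Arguments. Unset Strict Implicit. Unset Printing Implicit Defensive.
Import Order.TTheory GRing.Theory Num.Theory.
Local Open Scope ring_scope.

Section Defs.
Variables (R : realType) (X Y : finType).

Definition isdist (T : finType) (P : T -> R) : Prop :=
  (forall z, 0 <= P z) /\ \sum_(z : T) P z = 1.

Definition chi2 (T : finType) (P Q : T -> R) : \bar R :=
  if [forall z, (Q z == 0) ==> (P z == 0)]
  then (\sum_(z | Q z != 0) (P z - Q z) ^+ 2 / Q z)%:E
  else +oo%E.

Definition marg (P : Y * X -> R) (x : X) : R := \sum_(y : Y) P (y, x).

Definition cond (P : Y * X -> R) (x : X) (y : Y) : R := P (y, x) / marg P x.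

Definition eloss (A : Type) (L : Y -> A -> R) (q : Y -> R) (a : A) : R :=
  \sum_(y : Y) q y * L y a.

(* act q is the Bayes action for the distribution q (a minimizer, assumed to
   exist); H_L(Y | X = x) = E_{P_{Y|X=x}}[L(Y, a_{P_{Y|X=x}})] and
   H_L(Y | X) = sum_x P_X(x) H_L(Y | X = x). *)
Definition HL (A : Type) (L : Y -> A -> R) (act : (Y -> R) -> A)
  (P : Y * X -> R) : R :=
  \sum_(x : X) marg P x * eloss L (cond P x) (act (cond P x)).

Definition HLcross (A : Type) (L : Y -> A -> R) (act : (Y -> R) -> A)
  (Pt P : Y * X -> R) : R :=
  \sum_(x : X) marg Pt x * eloss L (cond Pt x) (act (cond P x)).

End Defs.

From HB Require Import structures.
From mathcomp Require Import all_boot all_order all_algebra.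
From mathcomp Require Import reals constructive_ereal ring lra.
Set Implicit Arguments. Unset Strict Implicit. Unset Printing Implicit Defensive.
Import Order.TTheory GRing.Theory Num.Theory.
Local Open Scope ring_scope.

(* A pmf takes values in [0, 1], so every term (Pt z - P z)^2 / P z of the
   chi^2 sum dominates (Pt z - P z)^2: a chi^2 divergence at most beta^2 forces
   |Pt z - P z| <= beta at every point.  Marginals are finite sums of joint
   probabilities and the cross entropy is linear in Pt once the actions
   act (P_{Y|X=x}) are fixed, so both move by O(beta); the conditional is a
   ratio whose denominator P_X(x) > 0 stays above P_X(x) / 2 for small beta. *)

Lemma ler_psum_term {R : numDomainType} {T : finType} (P : pred T)
    (F : T -> R) (z : T) :
  (forall i, P i -> 0 <= F i) -> P z -> F z <= \sum_(i | P i) F i.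
Proof.
move=> F_ge0 Pz; rewrite (bigD1 z) //= lerDl.
by apply: sumr_ge0 => i /andP[Pi _]; exact: F_ge0.
Qed.

Lemma isdist_le1 (R : realType) (T : finType) (P : T -> R) (z : T) :
  isdist P -> P z <= 1.
Proof. by case=> P_ge0 P_sum1; rewrite -P_sum1 (ler_psum_term (P := xpredT)). Qed.

Lemma chi2_norm_sub_le (R : realType) (T : finType) (P Pt : T -> R) (b : R) :
  isdist P -> 0 <= b -> (chi2 Pt P <= (b ^+ 2)%:E)%E ->
  forall z, `|Pt z - P z| <= b.
Proof.
move=> Pd b_ge0; have [P_ge0 _] := Pd; rewrite /chi2.
case: ifP => [/forallP abs_cont|]; last by rewrite leye_eq.
rewrite lee_fin => chi2_le z.
have [Pz0|Pz_neq0] := eqVneq (P z) 0.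
  by have /implyP/(_ (introT eqP Pz0))/eqP-> := abs_cont z; rewrite Pz0 subrr normr0.
have Pz_gt0 : 0 < P z by rewrite lt0r Pz_neq0 P_ge0.
have term_le : (Pt z - P z) ^+ 2 / P z <= b ^+ 2.
  apply: le_trans chi2_le; apply: (ler_psum_term (P := fun z => P z != 0)) => // i _.
  by rewrite divr_ge0 ?sqr_ge0.
have sqr_le : (Pt z - P z) ^+ 2 <= b ^+ 2.
  apply: le_trans term_le; rewrite ler_pdivlMr // ler_piMr ?sqr_ge0 //.
  exact: isdist_le1.
by rewrite -ler_sqr ?nnegrE // real_normK ?num_real.
Qed.

Lemma norm_ratio_sub_le (R : realFieldType) (a c m mt b N : R) :
  0 < m -> 0 <= c <= m -> m / 2 <= mt ->
  `|a - c| <= b -> `|mt - m| <= N * b ->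
  `|a / mt - c / m| <= 2 * (1 + N) / m * b.
Proof.
move=> m_gt0 /andP[c_ge0 c_le] mt_ge ac_le mtm_le.
have mt_gt0 : 0 < mt by apply: lt_le_trans mt_ge; rewrite divr_gt0.
have -> : a / mt - c / m = ((a - c) * m + c * (m - mt)) / (mt * m).
  by field; rewrite !lt0r_neq0.
rewrite normf_div (ger0_norm (ltW (mulr_gt0 mt_gt0 m_gt0))).
rewrite ler_pdivrMr ?mulr_gt0 //.
have num_le : `|(a - c) * m + c * (m - mt)| <= (1 + N) * b * m.
  apply: le_trans (ler_normD _ _) _.
  rewrite !normrM (ger0_norm (ltW m_gt0)) (ger0_norm c_ge0) (distrC m mt).
  have := ler_wpM2r (ltW m_gt0) ac_le; have := ler_pM c_ge0 (normr_ge0 _) c_le mtm_le.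
  lra.
apply: le_trans num_le _.
have -> : 2 * (1 + N) / m * b * (mt * m) = (1 + N) * b * (2 * mt).
  by field; rewrite lt0r_neq0.
have NB_ge0 : 0 <= (1 + N) * b.
  have := le_trans (normr_ge0 _) ac_le; have := le_trans (normr_ge0 _) mtm_le.
  nra.
by rewrite ler_wpM2l //; lra.
Qed.

Section JointDistributions.
Variables (R : realType) (X Y : finType).
Implicit Types (P Pt Q : Y * X -> R) (x : X) (y : Y).

Lemma le_marg Q x y : (forall z, 0 <= Q z) -> Q (y, x) <= marg Q x.
Proof.
by move=> Q_ge0; apply: (ler_psum_term (P := xpredT) (F := fun y => Q (y, x))).
Qed.

(* When marg Q x = 0 the conditional is the junk value 0, and so is Q (y, x). *)
Lemma marg_mul_cond Q x y :
  (forall z, 0 <= Q z) -> marg Q x * cond Q x y = Q (y, x).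
Proof.
move=> Q_ge0; rewrite /cond; have [m0|m_neq0] := eqVneq (marg Q x) 0.
  by rewrite m0 mul0r (psumr_eq0P (P := xpredT) (F := fun y => Q (y, x))).
by rewrite mulrCA divff // mulr1.
Qed.

Lemma marg_mul_eloss (A : Type) (L : Y -> A -> R) Q x (a : A) :
  (forall z, 0 <= Q z) ->
  marg Q x * eloss L (cond Q x) a = \sum_y Q (y, x) * L y a.
Proof.
move=> Q_ge0; rewrite /eloss mulr_sumr; apply: eq_bigr => y _.
by rewrite mulrA marg_mul_cond.
Qed.

Lemma norm_marg_sub_le P Pt (b : R) x :
  (forall z, `|Pt z - P z| <= b) -> `|marg Pt x - marg P x| <= #|Y|%:R * b.
Proof.
move=> near; rewrite /marg -sumrB; apply: le_trans (ler_norm_sum _ _ _) _.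
apply: le_trans (ler_sum _ (fun y _ => near (y, x))) _.
by rewrite sumr_const mulr_natl.
Qed.

Lemma norm_cond_sub_le P Pt (b : R) x y :
  (forall z, 0 <= P z) -> 0 < marg P x ->
  (forall z, `|Pt z - P z| <= b) -> 2 * #|Y|%:R * b <= marg P x ->
  `|cond Pt x y - cond P x y| <= 2 * (1 + #|Y|%:R) / marg P x * b.
Proof.
move=> P_ge0 m_gt0 near small; apply: norm_ratio_sub_le => //.
- by rewrite P_ge0 le_marg.
- by have := norm_marg_sub_le x near; rewrite ler_norml => /andP[lo _]; lra.
- exact: norm_marg_sub_le.
Qed.

Lemma HLcross_subE (A : Type) (L : Y -> A -> R) (act : (Y -> R) -> A) P Pt :
  (forall z, 0 <= P z) -> (forall z, 0 <= Pt z) ->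
  HLcross L act Pt P - HL L act P =
  \sum_x \sum_y (Pt (y, x) - P (y, x)) * L y (act (cond P x)).
Proof.
move=> P_ge0 Pt_ge0; rewrite /HLcross /HL -sumrB; apply: eq_bigr => x _.
by rewrite !marg_mul_eloss // -sumrB; under eq_bigr do rewrite -mulrBl.
Qed.

Lemma norm_HLcross_sub_le (A : Type) (L : Y -> A -> R) (act : (Y -> R) -> A)
    P Pt (b : R) :
  (forall z, 0 <= P z) -> (forall z, 0 <= Pt z) ->
  (forall z, `|Pt z - P z| <= b) ->
  `|HLcross L act Pt P - HL L act P|
    <= (\sum_x \sum_y `|L y (act (cond P x))|) * b.
Proof.
move=> P_ge0 Pt_ge0 near; rewrite HLcross_subE //.
rewrite mulr_suml; apply: le_trans (ler_norm_sum _ _ _) _; apply: ler_sum => x _.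
rewrite mulr_suml; apply: le_trans (ler_norm_sum _ _ _) _; apply: ler_sum => y _.
by rewrite normrM mulrC ler_wpM2l.
Qed.

End JointDistributions.

Theorem lemma2 (R : realType) (X Y : finType) (A : Type)
  (L : Y -> A -> R) (act : (Y -> R) -> A) (P : Y * X -> R) :
  isdist P ->
  (* act (P_{Y|X=x}) is a Bayes action (minimizer of expected loss) *)
  (forall x : X, 0 < marg P x ->
     forall a : A, eloss L (cond P x) (act (cond P x)) <= eloss L (cond P x) a) ->
  (* P_tX(x) = P_X(x) + O(beta) *)
  (forall x : X, exists C : R, exists beta0 : R, 0 < beta0 /\
     forall (beta : R) (Pt : Y * X -> R), 0 < beta <= beta0 -> isdist Pt ->
       (chi2 Pt P <= (beta ^+ 2)%:E)%E ->
       `|marg Pt x - marg P x| <= C * beta)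
  /\
  (* P_{tY|tX}(y|x) = P_{Y|X}(y|x) + O(beta) *)
  (forall (x : X) (y : Y), 0 < marg P x ->
     exists C : R, exists beta0 : R, 0 < beta0 /\
     forall (beta : R) (Pt : Y * X -> R), 0 < beta <= beta0 -> isdist Pt ->
       (chi2 Pt P <= (beta ^+ 2)%:E)%E ->
       `|cond Pt x y - cond P x y| <= C * beta)
  /\
  (* H_L(tY; Y | tX) = H_L(Y | X) + O(beta) *)
  (exists C : R, exists beta0 : R, 0 < beta0 /\
     forall (beta : R) (Pt : Y * X -> R), 0 < beta <= beta0 -> isdist Pt ->
       (chi2 Pt P <= (beta ^+ 2)%:E)%E ->
       `|HLcross L act Pt P - HL L act P| <= C * beta).
Proof.
move=> Pd _; have [P_ge0 _] := Pd.
have near b Pt : 0 < b -> (chi2 Pt P <= (b ^+ 2)%:E)%E ->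
    forall z, `|Pt z - P z| <= b.
  by move=> b_gt0; apply: chi2_norm_sub_le => //; exact: ltW.
split; [|split].
- move=> x; exists #|Y|%:R, 1; split=> // b Pt /andP[b_gt0 _] _ chi2_le.
  exact/norm_marg_sub_le/near.
- move=> x y m_gt0; set N : R := #|Y|%:R.
  have N21_gt0 : 0 < 2 * N + 1 by rewrite ltr_wpDl ?mulr_ge0.
  exists (2 * (1 + N) / marg P x), (marg P x / (2 * N + 1)).
  split=> [|b Pt /andP[b_gt0 b_le] [Pt_ge0 _] chi2_le]; first by rewrite divr_gt0.
  apply: norm_cond_sub_le => //; first exact: near.
  by move: b_le; rewrite ler_pdivlMr //; nra.
- exists (\sum_x \sum_y `|L y (act (cond P x))|), 1.
  split=> // b Pt /andP[b_gt0 _] [Pt_ge0 _] chi2_le.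
  by apply: norm_HLcross_sub_le => //; exact: near.
Qed.
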